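(* Consider the private bug bounty model described in the context, with given prizes $\boldsymbol v=(v^1,\dots,v^L)$, artificial-bug prizes $\boldsymbol v_a=(v_a^1,\dots,v_a^K)$ and artificial-bug complexities $\boldsymbol q_a=(q_a^1,\dots,q_a^K)$. Let $c^*$ denote the symmetric equilibrium threshold. If $\Psi(\underline c)\le \underline c$, then $c^*=\underline c$. If $\Psi(\overline c)\ge\overline c$, then $c^*=\overline c$. Otherwise, the symmetric equilibrium threshold $c^*=c^*(\boldsymbol v,\boldsymbol v_a,\boldsymbol q_a)$ is the unique solution $\hat c$ of $$\hat c=\Psi(\hat c;\boldsymbol v,\boldsymbol v_a,\boldsymbol q_a).$$
   Context: Private bug bounty model. There are $L$ potential organic bugs $l=1,\dots,L$; bug $l$ exists with probability $\mu^l\in(0,1]$, independently across bugs, and has complexity $q^l\in(0,1]$. There are $n$ risk-neutral agents. Agent $i$ has a private search cost $c_i$, drawn i.i.d. across agents from a distribution $F$ with support $[\underline c,\overline c]$, where $-\infty\le\underline c<\overline c\le\infty$ and $\overline c>0$; $F$ is continuous, has full support, has a finite density $f$, and $F/f$ is non-decreasing. The designer sets prizes $v^l\ge0$ for the organic bugs and inserts $K$ artificial bugs (which exist with certainty) with prizes $v_a^k\ge0$ and complexities $q_a^k\in[0,1]$. Each agent chooses whether to search, paying $c_i$ if so. A searching agent finds each existing bug of complexity $q$ with probability $q$, independently across agents and bugs; the prize of each found bug is paid to one of the agents who found it, chosen uniformly at random. For a threshold $\hat c$, $\Phi(\hat c;q)$ denotes the probability that a searching agent wins the prize of an existing bug of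 complexity $q$ when each of the other $n-1$ agents searches if and only if his/her cost is at most $\hat c$. Define $\Psi(\hat c;\boldsymbol v,\boldsymbol v_a,\boldsymbol q_a)=\sum_l v^l\mu^l\Phi(\hat c;q^l)+\sum_k v_a^k\Phi(\hat c;q_a^k)$ (written $\Psi(\hat c)$ when the prizes are fixed). A threshold strategy $\hat c$ means: search if and only if own cost is at most $\hat c$. The symmetric equilibrium threshold is the common threshold used by all agents in a symmetric Bayes–Nash equilibrium. *)

From HB Require Import structures.
From mathcomp Require Import all_boot all_order all_algebra.
From mathcomp Require Import all_classical all_reals all_analysis.
Set Implicit Arguments. Unset Strict Implicit. Unset Printing Implicit Defensive.
Import Order.TTheory GRing.Theory Num.Theory.
Import numFieldNormedType.Exports.
Local Open Scope classical_set_scope.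
Local Open Scope ring_scope.

Section BugBounty.
Variable R : realType.

(* Probability that a given other agent searches when all others use the
   threshold t (t may be an extended real: -oo = nobody searches,
   +oo = everybody searches). *)
Definition search_prob (F : R -> R) (t : \bar R) : R :=
  match t with
  | r%:E => F r
  | +oo%E => 1
  | -oo%E => 0
  end.

(* Phi(t; q): probability that a searching agent wins the prize of an
   existing bug of complexity q, when each of the other n-1 agents searches
   iff his cost is <= t.  The agent finds the bug w.p. q; each other agent
   finds it independently w.p. q*F(t); if k others found it, the prize goes
   to him w.p. 1/(k+1). *)
Definition Phi (n : nat) (F : R -> R) (t : \bar R) (q : R) : R :=
  let p := q * search_prob F t in
  \sum_(k < n) ('C(n.-1, k))%:R * p ^+ k * (1 - p) ^+ (n.-1 - k)
                 * (q / (k.+1)%:R).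

Definition Psi (n L K : nat) (F : R -> R) (mu ql v : 'I_L -> R)
  (va qa : 'I_K -> R) (t : \bar R) : R :=
  \sum_(l < L) v l * mu l * Phi n F t (ql l)
  + \sum_(k < K) va k * Phi n F t (qa k).

Definition cost_distribution (cl cu : \bar R) (F f : R -> R) : Prop :=
  [/\ (cl < cu)%E /\ (0%:E < cu)%E,
      continuous F /\ (forall x y, x <= y -> F x <= F y) /\
      (F x @[x --> -oo] --> (0:R)) /\ (F x @[x --> +oo] --> (1:R)),
      (forall x : R, (x%:E <= cl)%E -> F x = 0) /\
      (forall x : R, (cu <= x%:E)%E -> F x = 1),
      (forall x y : R, (cl <= x%:E)%E -> (y%:E <= cu)%E -> x < y -> F x < F y) &
      [/\ (forall x, 0 <= f x), measurable_fun setT f,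
          (forall x : R, (F x)%:E =
              (\int[@lebesgue_measure R]_(t in [set t : R | (t <= x)%R]) (f t)%:E)%E) &
          (* F / f non-decreasing on the support *)
          (forall x y : R, (cl < x%:E)%E -> (y%:E < cu)%E -> x <= y ->
              F x * f y <= F y * f x)]].

(* Interim expected payoff of an agent with cost c who searches, when all
   other agents use the threshold t (not searching yields 0). *)
Definition search_payoff (n L K : nat) (F : R -> R) (mu ql v : 'I_L -> R)
  (va qa : 'I_K -> R) (t : \bar R) (c : R) : R :=
  Psi n F mu ql v va qa t - c.

(* t is a symmetric Bayes-Nash equilibrium threshold: t lies in the
   (closed, extended) support and, when all others use threshold t, the
   threshold rule "search iff c <= t" is a best response for every cost type
   c in the interior of the support (the endpoints have probability 0). *)
Definition sym_eq_threshold (n L K : nat) (cl cu : \bar R) (F : R -> R)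
  (mu ql v : 'I_L -> R) (va qa : 'I_K -> R) (t : \bar R) : Prop :=
  (cl <= t)%E /\ (t <= cu)%E /\
  forall c : R, (cl < c%:E)%E -> (c%:E < cu)%E ->
    ((c%:E <= t)%E -> 0 <= search_payoff n F mu ql v va qa t c) /\
    ((t < c%:E)%E -> search_payoff n F mu ql v va qa t c <= 0).

End BugBounty.

From HB Require Import structures.
From mathcomp Require Import all_boot all_order all_algebra.
From mathcomp Require Import all_classical all_reals all_analysis.
From mathcomp Require Import ring lra.
Set Implicit Arguments. Unset Strict Implicit. Unset Printing Implicit Defensive.
Import Order.TTheory GRing.Theory Num.Theory.
Import numFieldNormedType.Exports.
Local Open Scope classical_set_scope.
Local Open Scope ring_scope.

(* Summing the binomial distribution of the number of rival finders against
   the share 1/(k+1) gives Phi(t; q) = q/n * sum_(j<n) (1 - q F(t))^j, a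
   polynomial in the search probability F(t) that is non-increasing in it on
   [0, 1].  Hence c |-> Psi(c) is continuous and non-increasing.  Against
   threshold t an agent with cost c searches iff c <= Psi(t), so equilibrium
   thresholds are the points of the support where the decreasing curve Psi
   crosses the diagonal, or the endpoints where Psi lies outside it; as Psi is
   non-increasing there is at most one such point, and when neither endpoint
   qualifies the intermediate value theorem applied to Psi(c) - c provides an
   interior one. *)

Section BinomialShare.
Variable R : numFieldType.

Lemma sum_binomial_tail (m : nat) (p : R) :
  \sum_(k < m.+1) 'C(m.+1, k.+1)%:R * p ^+ k * (1 - p) ^+ (m - k)
  = \sum_(j < m.+1) (1 - p) ^+ j.
Proof.
have [->|p0] := eqVneq p 0.
  rewrite big_ord_recl big1 => [|k _]; last by rewrite expr0n mulr0 mul0r.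
  rewrite subr0 (eq_bigr (fun=> 1)) => [|j _]; last by rewrite expr1n.
  by rewrite bin1 !expr1n expr0 !mulr1 addr0 sumr_const card_ord.
apply: (mulfI p0); rewrite mulr_sumr.
have geometric : 1 - (1 - p) ^+ m.+1 = p * \sum_(j < m.+1) (1 - p) ^+ j.
  rewrite -{1}(expr1n R m.+1) subrXX opprB addrC subrK.
  by congr (_ * _); apply: eq_bigr => j _; rewrite expr1n mul1r.
have tail : 1 - (1 - p) ^+ m.+1
    = \sum_(k < m.+1) (1 - p) ^+ (m - k) * p ^+ k.+1 *+ 'C(m.+1, k.+1).
  set r := 1 - p; have -> : 1 = (r + p) ^+ m.+1 by rewrite subrK expr1n.
  by rewrite exprDn big_ord_recl subn0 expr0 mulr1 bin0 mulr1n addrC addKr.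
rewrite -geometric tail; apply: eq_bigr => k _.
by rewrite exprS -mulr_natr; ring.
Qed.

Lemma sum_binomial_share (m : nat) (p q : R) :
  \sum_(k < m.+1) 'C(m, k)%:R * p ^+ k * (1 - p) ^+ (m - k) * (q / k.+1%:R)
  = q / m.+1%:R * \sum_(j < m.+1) (1 - p) ^+ j.
Proof.
rewrite -sum_binomial_tail mulr_sumr; apply: eq_bigr => k _.
have binS : 'C(m.+1, k.+1)%:R = m.+1%:R * 'C(m, k)%:R / k.+1%:R :> R.
  by rewrite -natrM mul_bin_diag natrM mulrAC divff ?mul1r ?pnatr_eq0.
by rewrite binS; field; rewrite !nat1r !pnatr_eq0.
Qed.

End BinomialShare.

Section SharePoly.
Variable R : realFieldType.

Definition share_poly (n : nat) (q : R) : {poly R} :=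
  (q / n%:R) *: \sum_(j < n) (1 - q *: 'X) ^+ j.

Lemma horner_share_poly n q s :
  (share_poly n q).[s] = q / n%:R * \sum_(j < n) (1 - q * s) ^+ j.
Proof.
rewrite hornerZ horner_sum; congr (_ * _); apply: eq_bigr => j _.
by rewrite !hornerE.
Qed.

Variables (n : nat) (q : R).
Hypothesis q01 : 0 <= q <= 1.

Lemma share_poly_ge0 s : 0 <= s <= 1 -> 0 <= (share_poly n q).[s].
Proof.
move=> /andP[s_ge0 s_le1]; have /andP[q_ge0 q_le1] := q01.
rewrite horner_share_poly mulr_ge0 ?divr_ge0 //.
by apply: sumr_ge0 => j _; rewrite exprn_ge0 // subr_ge0 mulr_ile1.
Qed.

Lemma share_poly_antitone s1 s2 : 0 <= s1 -> s1 <= s2 -> s2 <= 1 ->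
  (share_poly n q).[s2] <= (share_poly n q).[s1].
Proof.
move=> s1_ge0 s12 s2_le1; have /andP[q_ge0 q_le1] := q01.
rewrite !horner_share_poly ler_wpM2l ?divr_ge0 //.
apply: ler_sum => j _; apply: lerXn2r; rewrite ?nnegrE ?lerB ?ler_wpM2l //.
all: by rewrite subr_ge0 mulr_ile1 //; lra.
Qed.

End SharePoly.

Section PayoffPoly.
Variables (R : realFieldType) (n L K : nat) (mu ql v : 'I_L -> R) (va qa : 'I_K -> R).

Definition payoff_poly : {poly R} :=
  \sum_(l < L) (v l * mu l) *: share_poly n (ql l)
  + \sum_(k < K) va k *: share_poly n (qa k).

Lemma horner_payoff_poly s : payoff_poly.[s] =
  \sum_(l < L) v l * mu l * (share_poly n (ql l)).[s]
  + \sum_(k < K) va k * (share_poly n (qa k)).[s].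
Proof.
by rewrite hornerD !horner_sum; congr (_ + _); apply: eq_bigr => i _; rewrite hornerZ.
Qed.

Hypotheses (vmu_ge0 : forall l, 0 <= v l * mu l) (ql01 : forall l, 0 <= ql l <= 1).
Hypotheses (va_ge0 : forall k, 0 <= va k) (qa01 : forall k, 0 <= qa k <= 1).

Lemma payoff_poly_ge0 s : 0 <= s <= 1 -> 0 <= payoff_poly.[s].
Proof.
move=> s01; rewrite horner_payoff_poly addr_ge0 //; apply: sumr_ge0 => i _;
  exact/mulr_ge0/share_poly_ge0.
Qed.

Lemma payoff_poly_antitone s1 s2 : 0 <= s1 -> s1 <= s2 -> s2 <= 1 ->
  payoff_poly.[s2] <= payoff_poly.[s1].
Proof.
move=> s1_ge0 s12 s2_le1; rewrite !horner_payoff_poly lerD //;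
  apply: ler_sum => i _; exact/ler_wpM2l/share_poly_antitone.
Qed.

End PayoffPoly.

Lemma nondecreasing_cvg_bounds (R : realType) (F : R -> R) (a b : R) :
  {homo F : x y / x <= y} ->
  F x @[x --> -oo] --> a -> F x @[x --> +oo] --> b -> forall x, a <= F x <= b.
Proof.
move=> F_homo Fa Fb x; apply/andP; split.
- rewrite -(cvg_lim _ Fa) //; apply: limr_le; first exact: cvgP Fa.
  by near=> y; apply: F_homo; near: y; exact: nbhs_ninfty_le (num_real x).
- rewrite -(cvg_lim _ Fb) //; apply: limr_ge; first exact: cvgP Fb.
  by near=> y; apply: F_homo; near: y; exact: nbhs_pinfty_ge (num_real x).
Unshelve. all: end_near.
Qed.

Lemma exists_fin_between (R : realFieldType) (x y : \bar R) : (x < y)%E ->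
  exists2 c : R, (x < c%:E)%E & (c%:E < y)%E.
Proof.
case: x => [r||]; case: y => [s||] //= xy.
- by exists ((r + s) / 2); move: xy; rewrite !lte_fin; lra.
- by exists (r + 1); rewrite ?ltry ?lte_fin //; lra.
- by exists (s - 1); rewrite ?ltNyr ?lte_fin //; lra.
- by exists 0; rewrite ?ltNyr ?ltry.
Qed.

Section Cutoff.
Variables (R : realFieldType) (P : \bar R -> R) (cl cu : \bar R).

Definition equilibrium_cutoff (t : \bar R) : Prop :=
  [/\ (cl <= t)%E, (t <= cu)%E &
      forall c : R, (cl < c%:E)%E -> (c%:E < cu)%E ->
        ((c%:E <= t)%E -> c <= P t) /\ ((t < c%:E)%E -> P t <= c)].

Lemma equilibrium_cutoff_lower c0 : (cl < cu)%E -> cl = c0%:E -> P cl <= c0 ->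
  equilibrium_cutoff cl.
Proof.
move=> cl_cu cl_c0 P_c0; split; rewrite ?lexx ?ltW // => c cl_c _.
split=> [c_cl|_]; first by have := lt_le_trans cl_c c_cl; rewrite ltxx.
by apply: (le_trans P_c0); apply: ltW; rewrite -lte_fin -cl_c0.
Qed.

Lemma equilibrium_cutoff_upper c1 : (cl < cu)%E -> cu = c1%:E -> c1 <= P cu ->
  equilibrium_cutoff cu.
Proof.
move=> cl_cu cu_c1 P_c1; split; rewrite ?lexx ?ltW // => c _ c_cu.
split=> [_|cu_c]; last by have := lt_trans c_cu cu_c; rewrite ltxx.
by apply: le_trans P_c1; apply: ltW; rewrite -lte_fin -cu_c1.
Qed.

Lemma equilibrium_cutoff_fixpoint c : (cl < c%:E)%E -> (c%:E < cu)%E ->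
  P c%:E = c -> equilibrium_cutoff c%:E.
Proof.
move=> cl_c c_cu Pc; split; rewrite ?ltW // => d _ _.
by rewrite Pc !lee_fin !lte_fin; split=> // /ltW.
Qed.

Hypothesis P_antitone : forall s t, (s <= t)%E -> P t <= P s.

(* Every interior cost d with s < d <= t satisfies P s <= d <= P t <= P s,
   which is impossible for two distinct such d. *)
Lemma equilibrium_cutoff_unique s t :
  equilibrium_cutoff s -> equilibrium_cutoff t -> s = t.
Proof.
wlog st : s t / (s < t)%E => [wlog_st|[cl_s _ s_br] [_ t_cu t_br]].
  move=> Hs Ht; case: (ltgtP s t) => [st|ts|//]; first exact: wlog_st.
  by apply/esym/wlog_st.
have [d1 lo_d1 d1_hi] :
    exists2 d : R, (Order.max s cl < d%:E)%E & (d%:E < Order.min t cu)%E.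
  have s_cu := lt_le_trans st t_cu.
  apply: exists_fin_between.
  by rewrite lt_min !gt_max st s_cu (le_lt_trans cl_s st) (le_lt_trans cl_s s_cu).
have [d2 d1_d2 d2_hi] := exists_fin_between d1_hi.
move: lo_d1 d1_hi d2_hi; rewrite gt_max !lt_min.
move=> /andP[s_d1 cl_d1] /andP[_ d1_cu] /andP[d2_t d2_cu].
have cl_d2 := lt_trans cl_d1 d1_d2.
have Ps_d1 := (s_br d1 cl_d1 d1_cu).2 s_d1.
have d2_Pt := (t_br d2 cl_d2 d2_cu).1 (ltW d2_t).
have := le_trans d2_Pt (le_trans (P_antitone (ltW st)) Ps_d1).
by rewrite leNgt -lte_fin d1_d2.
Qed.

Lemma equilibrium_cutoffP x : equilibrium_cutoff x ->
  forall t, equilibrium_cutoff t <-> t = x.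
Proof. by move=> Hx t; split=> [Ht|->//]; exact: equilibrium_cutoff_unique. Qed.

End Cutoff.

Section AntitoneFixpoint.
Variables (R : realType) (g : R -> R).
Hypothesis g_antitone : {homo g : x y /~ x <= y}.

Lemma antitone_fixpoint_unique x y : x = g x -> y = g y -> x = y.
Proof.
move=> gx gy; case: (ltgtP x y) => // xy; have := g_antitone (ltW xy);
  by rewrite -gx -gy leNgt xy.
Qed.

Lemma continuous_antitone_fixpoint a b : continuous g -> a < g a -> g b < b ->
  exists2 c, a < c < b & c = g c.
Proof.
move=> g_cont a_lt b_gt.
have ab : a <= b.
  by rewrite leNgt; apply/negP => ba; have := g_antitone (ltW ba); lra.
have [c] : exists2 c, c \in `[a, b] & g c - c = 0.
  apply: IVT => //.
    by apply: continuous_subspaceT => x; exact: (continuousB (g_cont x) cvg_id).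
  by rewrite ge_min le_max !subr_le0 !subr_ge0 (ltW a_lt) (ltW b_gt) orbT.
rewrite in_itv /= => /andP[ac cb] /eqP; rewrite subr_eq0 => /eqP gc.
exists c; last by rewrite gc.
rewrite !lt_neqAle ac cb !andbT; apply/andP; split; apply/eqP => c_eq.
- by move: a_lt; rewrite c_eq gc ltxx.
- by move: b_gt; rewrite -c_eq gc ltxx.
Qed.

End AntitoneFixpoint.

Lemma exists_lt_image (R : realFieldType) (g : R -> R) (cl cu : \bar R) :
  (cl < cu)%E -> (forall x, 0 <= g x) -> (forall c0, cl = c0%:E -> c0 < g c0) ->
  exists2 a : R, (cl <= a%:E)%E & a < g a.
Proof.
move=> cl_cu g_ge0 cl_lt; case E: cl => [c0||].
- by exists c0 => //; exact: cl_lt.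
- by rewrite E ltNge leey in cl_cu.
- by exists (-1); rewrite ?leNye //; have := g_ge0 (-1); lra.
Qed.

Lemma exists_image_lt (R : realFieldType) (g : R -> R) (cl cu : \bar R) (B : R) :
  (cl < cu)%E -> (forall x, g x <= B) -> (forall c1, cu = c1%:E -> g c1 < c1) ->
  exists2 b : R, (b%:E <= cu)%E & g b < b.
Proof.
move=> cl_cu g_le cu_gt; case E: cu => [c1||].
- by exists c1 => //; exact: cu_gt.
- by exists (B + 1); rewrite ?leey //; have := g_le (B + 1); lra.
- by rewrite E ltNge leNye in cl_cu.
Qed.

Section SearchProb.
Variables (R : realType) (F : R -> R).
Hypothesis F01 : forall x, 0 <= F x <= 1.

Lemma search_prob_bounds t : 0 <= search_prob F t <= 1.
Proof. by case: t => [r||] //=; rewrite ?lexx ?ler01. Qed.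

Lemma search_prob_homo : {homo F : x y / x <= y} ->
  forall s t, (s <= t)%E -> search_prob F s <= search_prob F t.
Proof.
move=> F_homo [r||] [s||] //=.
- by rewrite lee_fin => /F_homo.
- by case/andP: (F01 r).
- by case/andP: (F01 s).
Qed.

End SearchProb.

Lemma Phi_share_poly (R : realType) n (F : R -> R) t q : (0 < n)%N ->
  Phi n F t q = (share_poly n q).[search_prob F t].
Proof. by case: n => // m _; rewrite horner_share_poly -sum_binomial_share. Qed.

Lemma sym_eq_thresholdE (R : realType) n L K cl cu (F : R -> R)
    (mu ql v : 'I_L -> R) (va qa : 'I_K -> R) t :
  sym_eq_threshold n cl cu F mu ql v va qa t <->
  equilibrium_cutoff (Psi n F mu ql v va qa) cl cu t.
Proof.
rewrite /sym_eq_threshold /search_payoff.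
split=> [[cl_t [t_cu br]]|[cl_t t_cu br]].
  split=> // c cl_c c_cu; rewrite -[c <= _]subr_ge0 -[_ <= c]subr_le0; exact: br.
do 2!split=> //; move=> c cl_c c_cu; rewrite subr_ge0 subr_le0; exact: br.
Qed.

Section PsiProperties.
Variables (R : realType) (n L K : nat) (mu ql v : 'I_L -> R) (va qa : 'I_K -> R).
Variable F : R -> R.
Hypothesis n_gt0 : (0 < n)%N.

Lemma Psi_payoff_poly t :
  Psi n F mu ql v va qa t = (payoff_poly n mu ql v va qa).[search_prob F t].
Proof.
rewrite horner_payoff_poly /Psi; congr (_ + _); apply: eq_bigr => i _;
  by rewrite Phi_share_poly.
Qed.

Lemma continuous_Psi : continuous F ->
  continuous (fun c : R => Psi n F mu ql v va qa c%:E).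
Proof.
move=> F_cont; have -> : (fun c => Psi n F mu ql v va qa c%:E)
    = horner (payoff_poly n mu ql v va qa) \o F.
  by apply/funext => c; rewrite /= Psi_payoff_poly.
by move=> c; apply: continuous_comp (F_cont c) (@continuous_horner _ _ (F c)).
Qed.

Hypotheses (vmu_ge0 : forall l, 0 <= v l * mu l) (ql01 : forall l, 0 <= ql l <= 1).
Hypotheses (va_ge0 : forall k, 0 <= va k) (qa01 : forall k, 0 <= qa k <= 1).
Hypotheses (F_homo : {homo F : x y / x <= y}) (F01 : forall x, 0 <= F x <= 1).

Lemma Psi_ge0 t : 0 <= Psi n F mu ql v va qa t.
Proof. by rewrite Psi_payoff_poly payoff_poly_ge0 ?search_prob_bounds. Qed.

Lemma Psi_antitone s t : (s <= t)%E ->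
  Psi n F mu ql v va qa t <= Psi n F mu ql v va qa s.
Proof.
move=> st; rewrite !Psi_payoff_poly; have /andP[s_ge0 _] := search_prob_bounds F01 s.
have /andP[_ t_le1] := search_prob_bounds F01 t.
by rewrite payoff_poly_antitone // search_prob_homo.
Qed.

End PsiProperties.

Theorem lemma1 (R : realType) (n L K : nat) (mu ql v : 'I_L -> R)
  (va qa : 'I_K -> R) (cl cu : \bar R) (F f : R -> R) :
  (0 < n)%N ->
  (forall l, 0 < mu l <= 1) -> (forall l, 0 < ql l <= 1) ->
  (forall l, 0 <= v l) ->
  (forall k, 0 <= va k) -> (forall k, 0 <= qa k <= 1) ->
  cost_distribution cl cu F f ->
  let Psi_ := Psi n F mu ql v va qa in
  let eq_ := sym_eq_threshold n cl cu F mu ql v va qa in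
  [/\ (forall c0 : R, cl = c0%:E -> Psi_ c0%:E <= c0 ->
         forall t, eq_ t <-> t = cl),
      (forall c1 : R, cu = c1%:E -> c1 <= Psi_ c1%:E ->
         forall t, eq_ t <-> t = cu) &
      ((~ exists c0 : R, cl = c0%:E /\ Psi_ c0%:E <= c0) ->
       (~ exists c1 : R, cu = c1%:E /\ c1 <= Psi_ c1%:E) ->
       exists c : R,
         [/\ (cl < c%:E)%E, (c%:E < cu)%E, c = Psi_ c%:E,
             (forall c' : R, c' = Psi_ c'%:E -> c' = c) &
             (forall t, eq_ t <-> t = c%:E)])].
Proof.
move=> n_gt0 mu01 ql01 v_ge0 va_ge0 qa01 cdF Psi_ eq_.
have [[cl_cu _] [F_cont [F_homo [F_ninfty F_pinfty]]] _ _ _] := cdF.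
have F01 := nondecreasing_cvg_bounds F_homo F_ninfty F_pinfty.
have vmu_ge0 l : 0 <= v l * mu l by case/andP: (mu01 l) => /ltW mu_ge0 _; exact: mulr_ge0.
have ql01' l : 0 <= ql l <= 1 by case/andP: (ql01 l) => /ltW -> ->.
have Psi_anti := Psi_antitone n_gt0 vmu_ge0 ql01' va_ge0 qa01 F_homo F01.
have eq_cutoff x : equilibrium_cutoff Psi_ cl cu x -> forall t, eq_ t <-> t = x.
  by move=> x_eq t; rewrite /eq_ sym_eq_thresholdE; exact: equilibrium_cutoffP.
split.
- move=> c0 cl_c0 Pc0; apply/eq_cutoff/(equilibrium_cutoff_lower cl_cu cl_c0).
  by rewrite cl_c0.
- move=> c1 cu_c1 Pc1; apply/eq_cutoff/(equilibrium_cutoff_upper cl_cu cu_c1).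
  by rewrite cu_c1.
move=> no_lower no_upper; pose g c := Psi_ c%:E.
have g_anti : {homo g : x y /~ x <= y} by move=> x y xy; apply: Psi_anti; rewrite lee_fin.
have [a cl_a a_lt] : exists2 a : R, (cl <= a%:E)%E & a < g a.
  apply: exists_lt_image cl_cu (fun x => Psi_ge0 n_gt0 vmu_ge0 ql01' va_ge0 qa01 F01 _) _.
  by move=> c0 cl_c0; rewrite ltNge; apply/negP => Pc0; apply: no_lower; exists c0.
have [b b_cu b_gt] : exists2 b : R, (b%:E <= cu)%E & g b < b.
  apply: exists_image_lt cl_cu (fun x => Psi_anti _ _ (leNye _)) _.
  by move=> c1 cu_c1; rewrite ltNge; apply/negP => Pc1; apply: no_upper; exists c1.
have g_cont : continuous g by exact: continuous_Psi.
have [c /andP[ac cb] c_fix] := continuous_antitone_fixpoint g_anti g_cont a_lt b_gt.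
have cl_c : (cl < c%:E)%E by apply: le_lt_trans cl_a _; rewrite lte_fin.
have c_cu : (c%:E < cu)%E by apply: lt_le_trans b_cu; rewrite lte_fin.
exists c; split => //.
- by move=> c' c'_fix; apply: (antitone_fixpoint_unique g_anti).
- by apply/eq_cutoff/equilibrium_cutoff_fixpoint; rewrite -?c_fix.
Qed.
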